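(* Let $(S,d)$ be a metric space with at least two points. If $f\in\operatorname{ext}_*(B^S_{\mathrm{BL}})$, then $\inf_{x\in S}f(x)=-\sup_{x\in S}f(x)$. In particular, if $S$ is compact, then $f$ attains both values $\|f\|_\infty$ and $-\|f\|_\infty$.
   Context: $\mathrm{BL}(S)$ is the space of bounded real-valued Lipschitz functions on $S$, $|f|_L=\sup_{x\neq y}|f(x)-f(y)|/d(x,y)$, $\|f\|_{\mathrm{BL}}=\|f\|_\infty+|f|_L$, $B^S_{\mathrm{BL}}=\{f\in\mathrm{BL}(S):\|f\|_{\mathrm{BL}}\le1\}$, $\operatorname{ext}$ denotes extreme points, and $\operatorname{ext}_*(B^S_{\mathrm{BL}})=\operatorname{ext}(B^S_{\mathrm{BL}})\setminus\{f\in B^S_{\mathrm{BL}}:|f|=\mathbf{1}\}$. *)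

From HB Require Import structures.
From mathcomp Require Import all_boot all_order all_algebra.
From mathcomp Require Import all_classical all_reals.
Set Implicit Arguments. Unset Strict Implicit. Unset Printing Implicit Defensive.
Import Order.TTheory GRing.Theory Num.Theory.
Local Open Scope classical_set_scope.
Local Open Scope ring_scope.

Section BL.
Variables (R : realType) (S : Type) (d : S -> S -> R).

Definition is_metric : Prop :=
  [/\ (forall x y, 0 <= d x y),
      (forall x y, d x y = 0 <-> x = y),
      (forall x y, d x y = d y x) &
      (forall x y z, d x z <= d x y + d y z)].

Definition open_d (U : set S) : Prop :=
  forall x, U x -> exists2 e : R, 0 < e & forall y, d x y < e -> U y.

Definition compact_d : Prop :=
  forall (I : Type) (U : I -> set S),
    (forall i, open_d (U i)) -> (forall x, exists i, U i x) ->
    exists2 F : set I, finite_set F & forall x, exists2 i, F i & U i x.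

Definition bounded_fun (f : S -> R) : Prop :=
  exists M : R, forall x, `|f x| <= M.
Definition lipschitz_fun (f : S -> R) : Prop :=
  exists L : R, forall x y, `|f x - f y| <= L * d x y.
Definition BL (f : S -> R) : Prop := bounded_fun f /\ lipschitz_fun f.

Definition sup_norm (f : S -> R) : R := sup (range (fun x => `|f x|)).
Definition lip_const (f : S -> R) : R :=
  sup [set r | exists x y, x <> y /\ r = `|f x - f y| / d x y].
Definition bl_norm (f : S -> R) : R := sup_norm f + lip_const f.

Definition BL_ball (f : S -> R) : Prop := BL f /\ bl_norm f <= 1.

Definition is_extreme_BL (f : S -> R) : Prop :=
  BL_ball f /\
  forall (g h : S -> R) (t : R), BL_ball g -> BL_ball h -> 0 < t < 1 ->
    f = (fun x => t * g x + (1 - t) * h x) -> g = h.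

Definition ext_star (f : S -> R) : Prop :=
  is_extreme_BL f /\ ~ (forall x, `|f x| = 1).

End BL.

From HB Require Import structures.
From mathcomp Require Import all_boot all_order all_algebra.
From mathcomp Require Import all_classical all_reals.
From mathcomp Require Import ring lra.
Set Implicit Arguments. Unset Strict Implicit.
Import Order.TTheory GRing.Theory Num.Theory.
Local Open Scope classical_set_scope.
Local Open Scope ring_scope.

(* If an extreme point [f] with [N = sup_norm f] satisfied [f >= c > -N],
   moving [f] slightly towards and away from the constant [1] would write it
   as the midpoint of two distinct points of the ball, unless [f = 1].  Hence
   [inf f = -N]; since [-f] is extreme as well, [sup f = N].  On a compact
   space the Lipschitz functions [f] and [-f] attain their suprema. *)

Section MetricSpace.
Variables (R : realType) (S : Type) (d : S -> S -> R).
Hypothesis hd : is_metric d.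

Lemma metric_ge0 x y : 0 <= d x y.
Proof. by case: hd. Qed.

Lemma metric_xx x : d x x = 0.
Proof. by case: hd => _ dE _ _; apply/dE. Qed.

Lemma metric_gt0 x y : x <> y -> 0 < d x y.
Proof.
case: hd => _ dE _ _ nxy; rewrite lt_def metric_ge0 andbT.
by apply/eqP => /dE.
Qed.

Lemma open_d_lt (u : S -> R) (a : R) :
  lipschitz_fun d u -> open_d d [set y | u y < a].
Proof.
move=> [L hL] x /= uxa.
have K0 : 0 < `|L| + 1 by rewrite ltr_wpDl.
exists ((a - u x) / (`|L| + 1)); first by rewrite divr_gt0 // subr_gt0.
move=> y dxy.
have uyx : u y - u x <= (`|L| + 1) * d x y.
  apply: le_trans (ler_norm _) _; rewrite distrC.
  apply: le_trans (hL x y) _; apply: ler_wpM2r; first exact: metric_ge0.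
  by apply: le_trans (ler_norm L) _; rewrite lerDl.
have : (`|L| + 1) * d x y < a - u x by rewrite mulrC -ltr_pdivlMr.
lra.
Qed.

(* Otherwise the open sets [u < sup - 1/(n+1)] would cover [S], and a finite
   subcover would keep [u] a fixed distance below its supremum. *)
Lemma compact_lipschitz_sup_attained (u : S -> R) :
  compact_d d -> lipschitz_fun d u -> has_sup (range u) ->
  exists x, u x = sup (range u).
Proof.
move=> hc hu hs; set M := sup (range u); apply: contrapT => hne.
have ltM x : u x < M.
  have uxM : u x <= M by apply: sup_upper_bound => //; exists x.
  by rewrite lt_neqAle uxM andbT; apply/eqP => eM; apply: hne; exists x.
pose U n := [set y | u y < M - n.+1%:R^-1].
have cover x : exists n, U n x.
  have [n hn] := ltr_add_invr (ltM x).
  by exists n; rewrite /U /= ltrBrDr.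
have [F finF coverF] := hc nat U (fun n => @open_d_lt u _ hu) cover.
have [X defF] := finite_fsetP.1 finF.
set n := \max_(i <- finmap.enum_fset X) i.
have eps0 : 0 < n.+1%:R^-1 :> R by rewrite invr_gt0.
have [_ [x _ <-] hx] := sup_adherent eps0 hs.
have [i Fi Ui] := coverF x.
have le_in : (i <= n)%N.
  by rewrite defF in Fi; apply: (@leq_bigmax_seq _ _ xpredT id).
have : n.+1%:R^-1 <= i.+1%:R^-1 :> R by rewrite lef_pV2 ?posrE // ler_nat ltnS.
move: hx Ui; rewrite /U /= -/M.
(* [lra] does not treat these inverses as atoms. *)
move: (n.+1%:R^-1 : R) (i.+1%:R^-1 : R) => a b; lra.
Qed.

End MetricSpace.

Section BoundedFunctions.
Variables (R : realType) (S : Type).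

Lemma bounded_fun_has_sup (f : S -> R) (x0 : S) :
  bounded_fun f -> has_sup (range f).
Proof.
move=> [M hM]; split; first by exists (f x0), x0.
by exists M => _ [x _ <-]; apply: le_trans (ler_norm _) (hM x).
Qed.

Lemma bounded_fun_has_lbound (f : S -> R) :
  bounded_fun f -> has_lbound (range f).
Proof.
move=> [M hM]; exists (- M) => _ [x _ <-].
by have := hM x; rewrite ler_norml => /andP[].
Qed.

Lemma sup_norm_ge (f : S -> R) (x : S) :
  bounded_fun f -> `|f x| <= sup_norm f.
Proof.
move=> [M hM]; apply: sup_upper_bound; last by exists x.
by split; [exists `|f x|, x | exists M => _ [y _ <-]].
Qed.

Lemma sup_norm_opp (f : S -> R) :
  sup_norm (fun x => - f x) = sup_norm f.
Proof. by rewrite /sup_norm; under eq_fun do rewrite normrN. Qed.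

End BoundedFunctions.

Section BoundedLipschitzBall.
Variables (R : realType) (S : Type) (d : S -> S -> R).
Hypothesis hd : is_metric d.
Hypothesis two_points : exists x y : S, x <> y.

Lemma lip_const_ge f x y :
  lipschitz_fun d f -> `|f x - f y| <= lip_const d f * d x y.
Proof.
move=> [L hL]; have [<-|nxy] := pselect (x = y).
  by rewrite subrr normr0 metric_xx // mulr0.
have dxy := metric_gt0 hd nxy.
rewrite -ler_pdivrMr //; apply: sup_upper_bound; last by exists x, y.
split; first by exists (`|f x - f y| / d x y), x, y.
by exists L => _ [a [b [nab ->]]]; rewrite ler_pdivrMr ?hL ?metric_gt0.
Qed.

Lemma lip_const_ge0 f : lipschitz_fun d f -> 0 <= lip_const d f.
Proof.
move=> hf; have [x [y nxy]] := two_points.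
rewrite -(pmulr_lge0 _ (metric_gt0 hd nxy)).
exact: le_trans (normr_ge0 _) (lip_const_ge x y hf).
Qed.

Lemma lip_const_opp f : lip_const d (fun x => - f x) = lip_const d f.
Proof.
have normN x y : `|- f x - - f y| = `|f x - f y| by rewrite -opprD normrN.
rewrite /lip_const; congr sup; apply/seteqP; split => _ [x [y [nxy ->]]];
  by exists x, y; rewrite normN.
Qed.

Lemma BL_ball_of_bounds f A K : (forall x, `|f x| <= A) ->
  (forall x y, `|f x - f y| <= K * d x y) -> A + K <= 1 -> BL_ball d f.
Proof.
move=> hA hK hAK; have [x0 [y0 nxy]] := two_points.
split; first by split; [exists A | exists K].
apply: le_trans hAK; apply: lerD.
- by apply: ge_sup; [exists `|f x0|, x0 | move=> _ [y _ <-]].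
- apply: ge_sup; first by exists (`|f x0 - f y0| / d x0 y0), x0, y0.
  by move=> _ [a [b [nab ->]]]; rewrite ler_pdivrMr ?hK ?metric_gt0.
Qed.

Lemma BL_ball_affine f L a b : (forall x y, `|f x - f y| <= L * d x y) ->
  (forall x, `|a * f x + b| <= 1 - `|a| * L) ->
  BL_ball d (fun x => a * f x + b).
Proof.
move=> fL hab.
apply: (BL_ball_of_bounds hab (K := `|a| * L)); last by rewrite subrK.
move=> x y; have -> : a * f x + b - (a * f y + b) = a * (f x - f y) by ring.
by rewrite normrM -mulrA ler_wpM2l.
Qed.

End BoundedLipschitzBall.

Section ExtremePoints.
Variables (R : realType) (S : Type) (d : S -> S -> R).

Lemma BL_ball_opp f : BL_ball d f -> BL_ball d (fun x => - f x).
Proof.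
move=> [[[M hM] [L hL]] hf].
split; last by rewrite /bl_norm sup_norm_opp lip_const_opp.
split; first by exists M => x; rewrite normrN.
by exists L => x y; rewrite -opprD normrN.
Qed.

Lemma is_extreme_BL_opp f :
  is_extreme_BL d f -> is_extreme_BL d (fun x => - f x).
Proof.
move=> [hf fext]; split; first exact: BL_ball_opp.
move=> g h t hg hh t01 defNf.
have defNg : (fun x => - g x) = (fun x => - h x).
  apply: (fext _ _ t _ _ t01); [exact: BL_ball_opp | exact: BL_ball_opp |].
  apply: funext => x; have := congr1 (fun k => - k x) defNf.
  by rewrite /= opprK => ->; ring.
by apply: funext => x; apply: oppr_inj; exact: (congr1 (fun k => k x) defNg).
Qed.

Lemma ext_star_opp f : ext_star d f -> ext_star d (fun x => - f x).
Proof.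
move=> [fext fn1]; split; first exact: is_extreme_BL_opp.
by move=> fNn1; apply: fn1 => x; rewrite -normrN fNn1.
Qed.

End ExtremePoints.

Section ExtremePointRange.
Variables (R : realType) (S : Type) (d : S -> S -> R).
Hypothesis hd : is_metric d.
Hypothesis two_points : exists x y : S, x <> y.

(* With [del = (N + c) / 2], the functions [(1 + del) f - del] and
   [(1 - del) f + del] lie in the ball and average to [f]. *)
Lemma ext_star_lbound_le f c :
  ext_star d f -> (forall x, c <= f x) -> c <= - sup_norm f.
Proof.
move=> [[[[fb fl] fNL] fext] fn1] cf.
have fN x := sup_norm_ge x fb.
have fL x y := lip_const_ge hd x y fl.
have L0 := lip_const_ge0 hd two_points fl.
move: fNL fN fL L0; rewrite /bl_norm.
move: (sup_norm f) (lip_const d f) => N L NL fN fL L0.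
have fx_bounds x : - N <= f x <= N by rewrite -ler_norml.
rewrite leNgt; apply/negP => Nc.
have [x0 _] := two_points.
have cN : c <= N by have /andP[_] := fx_bounds x0; apply: le_trans.
have [del [del0 del1 Ncdel]] :
    exists del : R, [/\ 0 < del, del <= 1 & N + c = 2 * del].
  by exists ((N + c) / 2); split; lra.
have gB : BL_ball d (fun x => (1 + del) * f x + - del).
  apply: (BL_ball_affine hd two_points fL) => x.
  rewrite [`|1 + del|]ger0_norm; last by lra.
  have /andP[_ fxN] := fx_bounds x; have cfx := cf x.
  rewrite ler_norml; apply/andP; split; nra.
have hB : BL_ball d (fun x => (1 - del) * f x + del).
  apply: (BL_ball_affine hd two_points fL) => x.
  rewrite [`|1 - del|]ger0_norm; last by lra.
  have /andP[Nfx fxN] := fx_bounds x.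
  rewrite ler_norml; apply/andP; split; nra.
have half01 : 0 < (2^-1 : R) < 1.
  by apply/andP; split; [rewrite invr_gt0 | rewrite invf_lt1]; lra.
have favg : f = (fun x => 2^-1 * ((1 + del) * f x + - del)
                          + (1 - 2^-1) * ((1 - del) * f x + del)).
  by apply: funext => x; field.
have gh := fext _ _ _ gB hB half01 favg.
apply: fn1 => x; have /= := congr1 (fun k => k x) gh => ghx.
have fx1 : f x = 1 by nra.
by rewrite fx1 normr1.
Qed.

Lemma ext_star_inf_range f : ext_star d f -> inf (range f) = - sup_norm f.
Proof.
move=> hf; have [[[[fb _] _] _] _] := hf.
have [x0 _] := two_points.
apply/le_anti/andP; split.
- apply: ext_star_lbound_le hf _ => x.
  by apply: (ge_inf (bounded_fun_has_lbound fb)); exists x.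
- apply: lb_le_inf; first by exists (f x0), x0.
  by move=> _ [x _ <-]; have := sup_norm_ge x fb; rewrite ler_norml => /andP[].
Qed.

Lemma ext_star_sup_range f : ext_star d f -> sup (range f) = sup_norm f.
Proof.
move=> hf; have [[[[fb _] _] _] _] := hf.
have [x0 _] := two_points.
apply/le_anti/andP; split.
- apply: ge_sup; first by exists (f x0), x0.
  by move=> _ [x _ <-]; apply: le_trans (ler_norm _) (sup_norm_ge x fb).
- rewrite -lerN2 -(sup_norm_opp f).
  apply: ext_star_lbound_le (ext_star_opp hf) _ => x; rewrite lerN2.
  by apply: (sup_upper_bound (bounded_fun_has_sup x0 fb)); exists x.
Qed.

End ExtremePointRange.

Theorem lemma3p4 (R : realType) (S : Type) (d : S -> S -> R)
  (hd : is_metric d) (h2 : exists x y : S, x <> y)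
  (f : S -> R) (hf : ext_star d f) :
  inf (range f) = - sup (range f) /\
  (compact_d d ->
     (exists x, f x = sup_norm f) /\ (exists x, f x = - sup_norm f)).
Proof.
have hNf := ext_star_opp hf.
have sup_f := ext_star_sup_range hd h2 hf.
have sup_Nf := ext_star_sup_range hd h2 hNf.
split; first by rewrite (ext_star_inf_range hd h2 hf) sup_f.
have [x0 _] := h2.
have [[[[fb fl] _] _] _] := hf; have [[[[fNb fNl] _] _] _] := hNf.
move=> hc; split.
- have [x fx] :=
    compact_lipschitz_sup_attained hd hc fl (bounded_fun_has_sup x0 fb).
  by exists x; rewrite fx sup_f.
- have [x fx] :=
    compact_lipschitz_sup_attained hd hc fNl (bounded_fun_has_sup x0 fNb).
  by exists x; rewrite -[f x]opprK fx sup_Nf sup_norm_opp.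
Qed.
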